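(* For every $\sigma\in\widetilde{S}_{AB}$, $\sigma=\inf^{\widetilde{S}_{AB}}\underline{\sigma}$, where $\underline{\sigma}:=\widetilde{S}^{pure}_{AB}\cap\{\sigma'\in\widetilde{S}_{AB}\;\vert\;\sigma\sqsubseteq_{\widetilde{S}_{AB}}\sigma'\}$, and $\widetilde{S}^{pure}_{AB}=\{\sigma_A\widetilde{\otimes}\sigma_B\;\vert\;\sigma_A\in\mathfrak{S}^{pure}_A,\sigma_B\in\mathfrak{S}^{pure}_B\}=Max(\widetilde{S}_{AB})$ is the set of completely meet-irreducible elements of $\widetilde{S}_{AB}$.
   Context: $(\mathfrak{S}_A,\mathfrak{E}_A,\epsilon^{\mathfrak{S}_A})$, $(\mathfrak{S}_B,\mathfrak{E}_B,\epsilon^{\mathfrak{S}_B})$ are States/Effects Chu spaces valued in $\mathfrak{B}=\{\mathbf{Y},\mathbf{N},\bot\}$ (meet $\wedge$, product $\bullet$: $x\bullet\mathbf{Y}=x$, $x\bullet\mathbf{N}=\mathbf{N}$, $\bot\bullet\bot=\bot$), whose spaces of states admit a description in terms of pure states: the set $\mathfrak{S}^{pure}$ of completely meet-irreducible elements equals the set of maximal elements and every state is the infimum of the pure states above it. The minimal tensor product $\widetilde{S}_{AB}$ consists of the maps $\inf^{\widetilde{S}_{AB}}_{i\in I}\sigma_{i,A}\widetilde{\otimes}\sigma_{i,B}:(\mathfrak{l}_A,\mathfrak{l}_B)\mapsto\bigwedge_{i\in I}\epsilon^{\mathfrak{S}_A}_{\mathfrak{l}_A}(\sigma_{i,A})\bullet\epsilon^{\mathfrak{S}_B}_{\mathfrak{l}_B}(\sigma_{i,B})$,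 ordered pointwise. *)

Inductive Bval : Type := BY | BN | Bbot.

Definition Ble (x y : Bval) : Prop := x = Bbot \/ x = y.

Definition Bneg (x : Bval) : Bval :=
  match x with BY => BN | BN => BY | Bbot => Bbot end.

Definition Bprod (x y : Bval) : Bval :=
  match x, y with
  | _, BY => x
  | _, BN => BN
  | BY, Bbot => Bbot
  | BN, Bbot => BN
  | Bbot, Bbot => Bbot
  end.

Section Order.
Variable T : Type.
Variables (D : T -> Prop) (le : T -> T -> Prop).

Definition glb_in (P : T -> Prop) (x : T) : Prop :=
  D x /\ (forall y, P y -> le x y) /\
  (forall z, D z -> (forall y, P y -> le z y) -> le z x).

Definition cmi_in (x : T) : Prop :=
  D x /\ forall P : T -> Prop, (exists y, P y) -> (forall y, P y -> D y) ->
    glb_in P x -> P x.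

Definition maximal_in (x : T) : Prop :=
  D x /\ forall y, D y -> le x y -> y = x.
End Order.

Arguments glb_in {T} D le P x.
Arguments cmi_in {T} D le x.
Arguments maximal_in {T} D le x.

Definition allT {T : Type} (_ : T) : Prop := True.

Record ChuSpace : Type := {
  St : Type;
  Ef : Type;
  sle : St -> St -> Prop;
  eval : Ef -> St -> Bval;         (* epsilon_l(sigma) = eval l sigma *)
  sle_refl : forall s, sle s s;
  sle_trans : forall s1 s2 s3, sle s1 s2 -> sle s2 s3 -> sle s1 s3;
  sle_antisym : forall s1 s2, sle s1 s2 -> sle s2 s1 -> s1 = s2;
  sinf_exists : forall P : St -> Prop, (exists s, P s) ->
    exists s, glb_in allT sle P s;
  eval_inf : forall (P : St -> Prop) (s : St) (l : Ef), (exists s', P s') ->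
    glb_in allT sle P s ->
    glb_in allT Ble (fun b => exists s', P s' /\ b = eval l s') (eval l s);
  eval_sep_states : forall s s', (forall l, eval l s = eval l s') -> s = s';
  eval_sep_effects : forall l l', (forall s, eval l s = eval l' s) -> l = l';
  ebar : Ef -> Ef;
  ebar_invol : forall l, ebar (ebar l) = l;
  eval_bar : forall l s, eval (ebar l) s = Bneg (eval l s);
  effY : Ef;
  eval_effY : forall s, eval effY s = BY
}.

Arguments sle {c} _ _.
Arguments eval {c} _ _.

Definition pure (A : ChuSpace) (s : St A) : Prop := cmi_in allT (@sle A) s.

Definition pure_description (A : ChuSpace) : Prop :=
  (forall s, pure A s <-> maximal_in allT (@sle A) s) /\
  (forall s, glb_in allT (@sle A) (fun s' => pure A s' /\ sle s s') s).

Definition tens {A B : ChuSpace} (sa : St A) (sb : St B) : Ef A -> Ef B -> Bval :=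
  fun la lb => Bprod (eval la sa) (eval lb sb).

Definition tle {A B : ChuSpace} (f g : Ef A -> Ef B -> Bval) : Prop :=
  forall la lb, Ble (f la lb) (g la lb).

(** The minimal tensor product: maps of the form
    inf_{i in I} sigma_{i,A} (tensor) sigma_{i,B}, I nonempty, the infimum
    being the pointwise meet in B. *)
Definition minTens (A B : ChuSpace) (f : Ef A -> Ef B -> Bval) : Prop :=
  exists (I : Type) (fa : I -> St A) (fb : I -> St B),
    inhabited I /\
    forall la lb,
      glb_in allT Ble (fun b => exists i, b = tens (fa i) (fb i) la lb) (f la lb).

Definition minTens_pure (A B : ChuSpace) (f : Ef A -> Ef B -> Bval) : Prop :=
  cmi_in (minTens A B) (@tle A B) f.

From Stdlib Require Import Classical FunctionalExtensionality.

(* Every state of A (resp. B) is the meet of the pure states above it, and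
   evaluations preserve meets.  The product of B preserves nonempty meets in
   each argument, so each generator [tens sa sb] is, pointwise, the meet of
   the pure tensors above it; as a meet of generators, so is every element of
   the minimal tensor product.  The unit effect recovers both factors of a
   tensor, which makes pure tensors exactly the maximal elements; and in an
   order where every element is the meet of the maximal elements above it,
   the completely meet-irreducible elements are the maximal ones. *)

Section GlbIn.
Context {T : Type} {D : T -> Prop} {le : T -> T -> Prop}.

Lemma glb_in_widen (S S' : T -> Prop) x :
  glb_in D le S x -> (forall y, S y -> S' y) -> (forall y, S' y -> le x y) ->
  glb_in D le S' x.
Proof.
  intros [Dx [_ Hgreatest]] HSS' Hlower.
  split; [exact Dx|]. split; [exact Hlower|].
  intros z Dz Hz. apply Hgreatest; auto.
Qed.

Lemma glb_in_ext (S S' : T -> Prop) x :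
  (forall y, S y <-> S' y) -> glb_in D le S x -> glb_in D le S' x.
Proof.
  intros HS Hx. apply (glb_in_widen S); [exact Hx | firstorder |].
  intros y Hy. apply Hx, HS, Hy.
Qed.

Lemma maximal_in_cmi_in x : maximal_in D le x -> cmi_in D le x.
Proof.
  intros [Dx Hmax]. split; [exact Dx|].
  intros P [y Py] HPD [_ [Hlower _]].
  rewrite <- (Hmax y (HPD y Py) (Hlower y Py)). exact Py.
Qed.

Hypothesis le_trans : forall x y z, le x y -> le y z -> le x z.

Lemma glb_in_union {I : Type} (S : I -> T -> Prop) (x : I -> T) m :
  (forall i, glb_in D le (S i) (x i)) ->
  glb_in D le (fun y => exists i, y = x i) m ->
  glb_in D le (fun y => exists i, S i y) m.
Proof.
  intros Hx [Dm [Hlower Hgreatest]].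
  split; [exact Dm|]. split.
  - intros y [i Hy]. apply le_trans with (x i); [apply Hlower; now exists i |].
    apply (Hx i), Hy.
  - intros z Dz Hz. apply Hgreatest; [exact Dz|].
    intros y [i ->]. apply (Hx i); [exact Dz|].
    intros w Hw. apply Hz. now exists i.
Qed.

Hypothesis le_refl : forall x, le x x.
Hypothesis le_antisym : forall x y, le x y -> le y x -> x = y.

Lemma glb_in_unique S x y : glb_in D le S x -> glb_in D le S y -> x = y.
Proof.
  intros [Dx [Hx Gx]] [Dy [Hy Gy]]. apply le_antisym; [apply Gy | apply Gx]; auto.
Qed.

Lemma glb_in_pair x y : D x -> le x y -> glb_in D le (fun z => z = x \/ z = y) x.
Proof.
  intros Dx Hxy. split; [exact Dx|]. split.
  - intros z [-> | ->]; [apply le_refl | exact Hxy].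
  - intros z _ Hz. apply Hz. now left.
Qed.

(* A meet of the empty family would be a greatest element, hence maximal. *)
Lemma maximal_above_exists x :
  glb_in D le (fun y => maximal_in D le y /\ le x y) x ->
  exists y, maximal_in D le y /\ le x y.
Proof.
  intros Hx. apply NNPP. intros Hnone. apply Hnone. exists x.
  destruct Hx as [Dx [_ Hgreatest]].
  split; [|apply le_refl]. split; [exact Dx|].
  intros y Dy Hxy. apply le_antisym; [|exact Hxy].
  apply Hgreatest; [exact Dy|]. intros z Hz. exfalso. apply Hnone. now exists z.
Qed.

Lemma cmi_in_maximal_in x :
  glb_in D le (fun y => maximal_in D le y /\ le x y) x ->
  cmi_in D le x -> maximal_in D le x.
Proof.
  intros Hx [_ Hcmi].
  apply (Hcmi (fun y => maximal_in D le y /\ le x y)); [| | exact Hx].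
  - apply maximal_above_exists, Hx.
  - intros y [[Dy _] _]. exact Dy.
Qed.

End GlbIn.

Lemma Ble_refl x : Ble x x.
Proof. now right. Qed.

Lemma Ble_trans x y z : Ble x y -> Ble y z -> Ble x z.
Proof. destruct x, y, z; unfold Ble; intuition congruence. Qed.

Lemma Ble_antisym x y : Ble x y -> Ble y x -> x = y.
Proof. destruct x, y; unfold Ble; intuition congruence. Qed.

(* B has no top element, so a subset of B with a meet is nonempty. *)
Lemma glbB_nonempty S x : glb_in allT Ble S x -> exists s, S s.
Proof.
  intros [_ [_ Hgreatest]]. apply NNPP. intros Hempty.
  assert (HY : Ble BY x) by (apply Hgreatest; firstorder).
  assert (HN : Ble BN x) by (apply Hgreatest; firstorder).
  destruct x; unfold Ble in *; intuition discriminate.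
Qed.

Lemma glbB_mem S x : glb_in allT Ble S x -> x <> Bbot -> S x.
Proof.
  intros Hx Hbot. destruct (glbB_nonempty S x Hx) as [s Hs].
  destruct (proj1 (proj2 Hx) s Hs) as [Hxbot | ->]; [contradiction | exact Hs].
Qed.

Lemma glbB_bot S : glb_in allT Ble S Bbot -> S Bbot \/ (S BY /\ S BN).
Proof.
  intros [_ [_ Hgreatest]].
  destruct (classic (S Bbot)) as [Hbot | Hbot]; [now left | right].
  split; apply NNPP; intros Hnot.
  - assert (H : Ble BN Bbot).
    { apply Hgreatest; [exact I|]. intros [] Hs; [contradiction | apply Ble_refl | contradiction]. }
    destruct H; discriminate.
  - assert (H : Ble BY Bbot).
    { apply Hgreatest; [exact I|]. intros [] Hs; [apply Ble_refl | contradiction | contradiction]. }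
    destruct H; discriminate.
Qed.

Lemma glbB_intro (S : Bval -> Prop) x :
  (exists s, S s) -> (forall s, S s -> Ble x s) ->
  (x = Bbot -> S Bbot \/ (S BY /\ S BN)) -> glb_in allT Ble S x.
Proof.
  intros [s0 Hs0] Hlower Hbot. split; [exact I|]. split; [exact Hlower|].
  intros z _ Hz. destruct x.
  1, 2: destruct (Hlower s0 Hs0) as [H | <-]; [discriminate | exact (Hz _ Hs0)].
  destruct (Hbot eq_refl) as [H | [HY HN]]; [exact (Hz _ H)|].
  pose proof (Hz _ HY). pose proof (Hz _ HN).
  destruct z; unfold Ble in *; intuition discriminate.
Qed.

Lemma Bprod_BY_r x : Bprod x BY = x.
Proof. now destruct x. Qed.

Lemma Bprod_BY_l x : Bprod BY x = x.
Proof. now destruct x. Qed.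

Lemma Bprod_mono x y u v : Ble x u -> Ble y v -> Ble (Bprod x y) (Bprod u v).
Proof. destruct x, y, u, v; unfold Ble; simpl; intuition congruence. Qed.

Lemma Bprod_glb (X Y : Bval -> Prop) x y :
  glb_in allT Ble X x -> glb_in allT Ble Y y ->
  glb_in allT Ble (fun w => exists u v, X u /\ Y v /\ w = Bprod u v) (Bprod x y).
Proof.
  intros Hx Hy.
  destruct (glbB_nonempty X x Hx) as [u0 Hu0], (glbB_nonempty Y y Hy) as [v0 Hv0].
  apply glbB_intro.
  - now exists (Bprod u0 v0), u0, v0.
  - intros w (u & v & Hu & Hv & ->).
    apply Bprod_mono; [apply Hx | apply Hy]; assumption.
  - intros Hbot. destruct x, y; try discriminate.
    + pose proof (glbB_mem X BY Hx ltac:(discriminate)) as HXY.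
      destruct (glbB_bot Y Hy) as [HYbot | [HYY HYN]].
      * left. now exists BY, Bbot.
      * right. split; [now exists BY, BY | now exists BY, BN].
    + pose proof (glbB_mem Y BY Hy ltac:(discriminate)) as HYY.
      destruct (glbB_bot X Hx) as [HXbot | [HXY HXN]].
      * left. now exists Bbot, BY.
      * right. split; [now exists BY, BY | now exists BN, BY].
    + destruct (glbB_bot X Hx) as [HXbot | [HXY HXN]].
      * left. destruct (glbB_bot Y Hy) as [HYbot | [HYY _]];
          [now exists Bbot, Bbot | now exists Bbot, BY].
      * destruct (glbB_bot Y Hy) as [HYbot | [HYY HYN]].
        -- left. now exists BY, Bbot.
        -- right. split; [now exists BY, BY | now exists BN, BN].
Qed.

Section States.
Variable C : ChuSpace.

Lemma sle_iff_eval_le (s s' : St C) :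
  sle s s' <-> forall l, Ble (eval l s) (eval l s').
Proof.
  split.
  - intros Hss' l.
    pose proof (glb_in_pair (sle_refl C) s s' I Hss') as Hpair.
    destruct (eval_inf C _ s l (ex_intro _ s (or_introl eq_refl)) Hpair) as [_ [Hlower _]].
    apply Hlower. exists s'; auto.
  - intros Hle.
    destruct (sinf_exists C (fun z => z = s \/ z = s') (ex_intro _ s (or_introl eq_refl)))
      as [m Hm].
    assert (Hms : m = s).
    { apply (eval_sep_states C). intros l.
      apply (glb_in_unique (D := allT) Ble_antisym
               (fun b => exists z, (z = s \/ z = s') /\ b = eval l z)).
      - exact (eval_inf C _ m l (ex_intro _ s (or_introl eq_refl)) Hm).
      - apply (glb_in_ext (fun b => b = eval l s \/ b = eval l s')).
        + intros b. split.
          * intros [-> | ->]; eauto.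
          * intros (z & [-> | ->] & ->); auto.
        + exact (glb_in_pair Ble_refl _ _ I (Hle l)). }
    subst m. apply Hm. now right.
Qed.

Hypothesis HC : pure_description C.

Lemma pure_le_eq (p s : St C) : pure C p -> sle p s -> s = p.
Proof. intros Hp Hps. apply (proj1 HC p) in Hp. exact (proj2 Hp s I Hps). Qed.

Lemma pure_above (s : St C) : exists p, pure C p /\ sle s p.
Proof.
  destruct HC as [Hpure Hglb].
  destruct (maximal_above_exists (D := allT) (sle_refl C) (sle_antisym C) s) as [p [Hp Hsp]].
  - apply (glb_in_ext (fun p => pure C p /\ sle s p)); [|apply Hglb].
    intros p. specialize (Hpure p). tauto.
  - exists p. split; [apply Hpure|]; assumption.
Qed.

Lemma eval_glb_pure_above (s : St C) l :
  glb_in allT Ble (fun b => exists p, (pure C p /\ sle s p) /\ b = eval l p) (eval l s).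
Proof. apply eval_inf; [apply pure_above | apply HC]. Qed.

End States.

Section MinimalTensorProduct.
Variables A B : ChuSpace.

Definition pure_tens (f : Ef A -> Ef B -> Bval) : Prop :=
  exists (sa : St A) (sb : St B), pure A sa /\ pure B sb /\ f = tens sa sb.

Lemma tle_refl (f : Ef A -> Ef B -> Bval) : tle f f.
Proof. intros la lb. apply Ble_refl. Qed.

Lemma tle_trans (f g h : Ef A -> Ef B -> Bval) : tle f g -> tle g h -> tle f h.
Proof. intros Hfg Hgh la lb. exact (Ble_trans _ _ _ (Hfg la lb) (Hgh la lb)). Qed.

Lemma tle_antisym (f g : Ef A -> Ef B -> Bval) : tle f g -> tle g f -> f = g.
Proof.
  intros Hfg Hgf. extensionality la. extensionality lb.
  exact (Ble_antisym _ _ (Hfg la lb) (Hgf la lb)).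
Qed.

Lemma glb_in_tle_pointwise (D P : (Ef A -> Ef B -> Bval) -> Prop) f :
  D f ->
  (forall la lb, glb_in allT Ble (fun v => exists p, P p /\ v = p la lb) (f la lb)) ->
  glb_in D tle P f.
Proof.
  intros Df Hf. split; [exact Df|]. split.
  - intros p Hp la lb. apply (Hf la lb). now exists p.
  - intros g _ Hg la lb. apply (Hf la lb); [exact I|].
    intros v (p & Hp & ->). apply Hg, Hp.
Qed.

Lemma tens_mono (a a' : St A) (b b' : St B) :
  sle a a' -> sle b b' -> tle (tens a b) (tens a' b').
Proof.
  intros Ha Hb la lb. apply Bprod_mono; [apply sle_iff_eval_le, Ha | apply sle_iff_eval_le, Hb].
Qed.

(* The unit effect [effY] recovers each factor of a tensor. *)
Lemma tens_le_inv (a a' : St A) (b b' : St B) :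
  tle (tens a b) (tens a' b') -> sle a a' /\ sle b b'.
Proof.
  intros H. split; apply sle_iff_eval_le; intros l.
  - specialize (H l (effY B)). unfold tens in H. now rewrite !eval_effY, !Bprod_BY_r in H.
  - specialize (H (effY A) l). unfold tens in H. now rewrite !eval_effY, !Bprod_BY_l in H.
Qed.

Lemma minTens_tens (a : St A) (b : St B) : minTens A B (tens a b).
Proof.
  exists unit, (fun _ => a), (fun _ => b). split; [exact (inhabits tt)|].
  intros la lb. apply glbB_intro.
  - now exists (tens a b la lb), tt.
  - intros v [_ ->]. apply Ble_refl.
  - intros Hbot. left. exists tt. now rewrite Hbot.
Qed.

Lemma minTens_le_gen {I : Type} (fa : I -> St A) (fb : I -> St B) f :
  (forall la lb,
     glb_in allT Ble (fun v => exists i, v = tens (fa i) (fb i) la lb) (f la lb)) ->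
  forall i, tle f (tens (fa i) (fb i)).
Proof. intros Hf i la lb. apply (Hf la lb). now exists i. Qed.

Hypotheses (HA : pure_description A) (HB : pure_description B).

Lemma tens_glb_pure_above (sa : St A) (sb : St B) la lb :
  glb_in allT Ble
    (fun v => exists a b, ((pure A a /\ sle sa a) /\ (pure B b /\ sle sb b)) /\
                          v = tens a b la lb)
    (tens sa sb la lb).
Proof.
  eapply glb_in_ext;
    [| exact (Bprod_glb _ _ _ _ (eval_glb_pure_above A HA sa la)
                                 (eval_glb_pure_above B HB sb lb))].
  intros v. split.
  - intros (u & w & (a & Ha & ->) & (b & Hb & ->) & ->). now exists a, b.
  - intros (a & b & [Ha Hb] & ->).
    exists (eval la a), (eval lb b). split; [now exists a | split; [now exists b | reflexivity]].
Qed.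

Lemma minTens_glb_pure_tens_above sigma :
  minTens A B sigma ->
  glb_in (minTens A B) tle (fun p => pure_tens p /\ tle sigma p) sigma.
Proof.
  intros Hsigma. apply glb_in_tle_pointwise; [exact Hsigma|].
  destruct Hsigma as (I & fa & fb & _ & Hgen). intros la lb.
  apply (glb_in_widen
           (fun v => exists i a b, ((pure A a /\ sle (fa i) a) /\ (pure B b /\ sle (fb i) b)) /\
                                   v = tens a b la lb)).
  - apply (glb_in_union Ble_trans _ (fun i => tens (fa i) (fb i) la lb)); [|apply Hgen].
    intros i. apply tens_glb_pure_above.
  - intros v (i & a & b & [[Ha Hfa] [Hb Hfb]] & ->). exists (tens a b). split; [|reflexivity].
    split; [now exists a, b|].
    apply tle_trans with (tens (fa i) (fb i)); [apply (minTens_le_gen fa fb), Hgen|].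
    apply tens_mono; assumption.
  - intros v (p & [_ Hp] & ->). apply Hp.
Qed.

Lemma maximal_minTens_iff f : maximal_in (minTens A B) tle f <-> pure_tens f.
Proof.
  split.
  - intros [Hf Hmax]. destruct Hf as (I & fa & fb & [i0] & Hgen).
    destruct (pure_above A HA (fa i0)) as [a [Ha Hfa]].
    destruct (pure_above B HB (fb i0)) as [b [Hb Hfb]].
    exists a, b. split; [exact Ha|]. split; [exact Hb|].
    symmetry. apply Hmax; [apply minTens_tens|].
    apply tle_trans with (tens (fa i0) (fb i0)); [apply (minTens_le_gen fa fb), Hgen|].
    apply tens_mono; assumption.
  - intros (sa & sb & Hsa & Hsb & ->). split; [apply minTens_tens|].
    intros g (I & ga & gb & [i0] & Hgen) Hle.
    pose proof (minTens_le_gen ga gb g Hgen i0) as Hg.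
    destruct (tens_le_inv _ _ _ _ (tle_trans _ _ _ Hle Hg)) as [Ha Hb].
    rewrite (pure_le_eq A HA sa _ Hsa Ha), (pure_le_eq B HB sb _ Hsb Hb) in Hg.
    apply tle_antisym; assumption.
Qed.

End MinimalTensorProduct.

Theorem mainTheorem13 (A B : ChuSpace)
  (HA : pure_description A) (HB : pure_description B) :
  (forall sigma, minTens A B sigma ->
     glb_in (minTens A B) (@tle A B)
       (fun sigma' => minTens_pure A B sigma' /\ tle sigma sigma') sigma)
  /\ (forall f, minTens_pure A B f <->
        exists (sa : St A) (sb : St B), pure A sa /\ pure B sb /\ f = tens sa sb)
  /\ (forall f, minTens_pure A B f <-> maximal_in (minTens A B) (@tle A B) f).
Proof.
  assert (Hmax := maximal_minTens_iff A B HA HB).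
  assert (Hcmi : forall f, minTens_pure A B f <-> maximal_in (minTens A B) tle f).
  { intros f. split; [|apply maximal_in_cmi_in].
    intros Hf. apply (cmi_in_maximal_in (tle_refl A B) (tle_antisym A B)); [|exact Hf].
    apply (glb_in_ext (fun p => pure_tens A B p /\ tle f p)).
    - intros p. specialize (Hmax p). tauto.
    - apply minTens_glb_pure_tens_above; [assumption.. | exact (proj1 Hf)]. }
  split; [|split].
  - intros sigma Hsigma.
    apply (glb_in_ext (fun p => pure_tens A B p /\ tle sigma p)).
    + intros p. specialize (Hmax p). specialize (Hcmi p). tauto.
    + apply minTens_glb_pure_tens_above; assumption.
  - intros f. exact (iff_trans (Hcmi f) (Hmax f)).
  - exact Hcmi.
Qed.
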